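(* Let $\mathbb F\in\{\mathbb C,\mathbb R\}$, $n>1$, and $\gamma=(\gamma_1,\dots,\gamma_n)\in\mathbb F^n$ such that $\operatorname{diag}(\gamma_1,\dots,\gamma_n)$ is not proportional to the identity matrix. Let $\mathfrak t_\gamma(n)$ and ${\rm T}_\gamma(n)$ be as in the context. For $B=(b_{ij})\in{\rm T}_\gamma(n)$ with inverse $B^{-1}=(\widehat b_{ij})$, the coadjoint action ${\rm Ad}^*_B$ maps the point of $\mathfrak t_\gamma^*(n)$ with coordinates $(x_{ij})_{j<i}$, $x_0$ to the point with coordinates $(\mathcal I_{ij})_{j<i}$, $\mathcal I_0$, where \[ \mathcal I_{ij}=\sum_{i\leqslant i',\,j'\leqslant j}b_{ii'}\widehat b_{j'j}x_{i'j'}, \quad j<i, \qquad \mathcal I_0=x_0+\sum_{j<i}\,\sum_{j\leqslant l\leqslant i}\gamma_lb_{li}\widehat b_{jl}x_{ij} \] (equivalently, the strictly lower triangular part of $\mathcal I$ is $BXB^{-1}$). Consequently these expressions, as functions of $B\in{\rm T}_\gamma(n)$ and of the coordinates $x$, form a complete set of functionally independent lifted invariants of ${\rm Ad}^*_{{\rm T}_\gamma(n)}$.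
   Context: $\mathfrak t_\gamma(n)$ is the Lie algebra over $\mathbb F$ with basis $e_{ij}$ ($1\leqslant i<j\leqslant n$) and $f$, with brackets $[e_{ij},e_{i'j'}]=\delta_{i'j}e_{ij'}-\delta_{ij'}e_{i'j}$ and $[f,e_{ij}]=(\gamma_i-\gamma_j)e_{ij}$; it is realized by matrices via $e_{ij}\sim E^n_{ij}$ (matrix unit) and $f\sim\operatorname{diag}(\gamma_1,\dots,\gamma_n)$. It is the Lie algebra of the group ${\rm T}_\gamma(n)=\{B\text{ nonsingular upper triangular } n\times n \mid \exists\,\varepsilon\in\mathbb F:\ b_{ii}=e^{\gamma_i\varepsilon}\ \forall i\}$, acting by the adjoint action ${\rm Ad}_BY=BYB^{-1}$. For $i<j$, $x_{ji}$ denotes the coordinate function on the dual space $\mathfrak t_\gamma^*(n)$ dual to $e_{ij}$ (i.e. with respect to the dual basis $e^*_{ji}$, $\langle e^*_{j'i'},e_{ij}\rangle=\delta_{ii'}\delta_{jj'}$), and $x_0$ the coordinate dual to $f$; $X$ is the strictly lower triangular $n\times n$ matrix with entries $x_{ij}$ for $i>j$ and zeros elsewhere. The coadjoint action is $({\rm Ad}^*_B\xi)(y)=\xi({\rm Ad}_{B^{-1}}y)$. A lifted invariant (in the sense of the moving-frame method of Fels and Olver) is a component of the map $(B,\xi)\mapsto{\rm Ad}^*_B\xi$ written in coordinates. *)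

From HB Require Import structures.
From mathcomp Require Import all_boot all_order all_algebra.
From mathcomp Require Import all_classical all_reals all_analysis.
From mathcomp Require Import complex.
Set Implicit Arguments. Unset Strict Implicit. Unset Printing Implicit Defensive.
Import Order.TTheory GRing.Theory Num.Theory.
Local Open Scope ring_scope.

Definition cexp (R : realType) (z : R[i]) : R[i] :=
  Complex (expR (complex.Re z) * cos (complex.Im z)) (expR (complex.Re z) * sin (complex.Im z)).

(* An element y = c f + sum_{i<j} a_ij e_ij of t_gamma(n) is given by its
   coordinates (c, A); only the strictly upper part of A is used.
   Its matrix realization: f ~ diag(gamma), e_ij ~ E_ij. *)
Definition realize (F : fieldType) (n : nat) (g : 'rV[F]_n)
  (c : F) (A : 'M[F]_n) : 'M[F]_n :=
  c *: diag_mx g + \matrix_(i, j) (if (i < j)%N then A i j else 0).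

(* The element xi of t_gamma^*(n) with coordinates x0 (dual to f) and
   x_{ji} (j > i, dual to e_ij, stored as the strictly lower triangular
   matrix X) evaluated at y = (c, A). *)
Definition pair (F : fieldType) (n : nat) (x0 : F) (X : 'M[F]_n)
  (c : F) (A : 'M[F]_n) : F :=
  c * x0 + \sum_(i < n) \sum_(j < n | (i < j)%N) A i j * X j i.

Definition strictly_lower (F : fieldType) (n : nat) (X : 'M[F]_n) : Prop :=
  forall i j : 'I_n, (i <= j)%N -> X i j = 0.

Definition in_Tgamma (F : fieldType) (expF : F -> F) (n : nat)
  (g : 'rV[F]_n) (B : 'M[F]_n) : Prop :=
  B \in unitmx /\ (forall i j : 'I_n, (j < i)%N -> B i j = 0) /\
  exists eps : F, forall i : 'I_n, B i i = expF (g 0 i * eps).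

Definition Iij (F : fieldType) (n : nat) (B X : 'M[F]_n) (i j : 'I_n) : F :=
  \sum_(i' < n | (i <= i')%N) \sum_(j' < n | (j' <= j)%N)
     B i i' * invmx B j' j * X i' j'.

Definition I0 (F : fieldType) (n : nat) (g : 'rV[F]_n) (B X : 'M[F]_n)
  (x0 : F) : F :=
  x0 + \sum_(i < n) \sum_(j < n | (j < i)%N)
         \sum_(l < n | (j <= l <= i)%N) g 0 l * B l i * invmx B j l * X i j.

Definition Imat (F : fieldType) (n : nat) (B X : 'M[F]_n) : 'M[F]_n :=
  \matrix_(i, j) (if (j < i)%N then Iij B X i j else 0).

Definition lemma1_stmt (F : fieldType) (expF : F -> F) : Prop :=
  forall (n : nat) (g : 'rV[F]_n),
  (1 < n)%N ->
  (exists i j : 'I_n, g 0 i != g 0 j) ->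
  forall B : 'M[F]_n, in_Tgamma expF g B ->
  [/\
    (* Ad_{B^{-1}} maps t_gamma(n) into itself *)
    (forall (c : F) (A : 'M[F]_n), exists (c' : F) (A' : 'M[F]_n),
        realize g c' A' = invmx B *m realize g c A *m B),
    (* coadjoint action: (Ad^*_B xi)(y) = xi(Ad_{B^{-1}} y) for all y, and
       Ad^*_B xi is the point with coordinates I_0, (I_{ij})_{j<i} *)
    (forall (x0 : F) (X : 'M[F]_n), strictly_lower X ->
      forall (c : F) (A : 'M[F]_n) (c' : F) (A' : 'M[F]_n),
        realize g c' A' = invmx B *m realize g c A *m B ->
        pair x0 X c' A' = pair (I0 g B X x0) (Imat B X) c A),
    (forall X : 'M[F]_n, strictly_lower X ->
      forall i j : 'I_n, (j < i)%N -> Iij B X i j = (B *m X *m invmx B) i j) &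
    (* functional independence: for fixed B, x |-> (I_0, I) is injective *)
    (forall (x0 x0' : F) (X X' : 'M[F]_n), strictly_lower X -> strictly_lower X' ->
      I0 g B X x0 = I0 g B X' x0' -> Imat B X = Imat B X' ->
      x0 = x0' /\ X = X')].

From HB Require Import structures.
From mathcomp Require Import all_boot all_order all_algebra.
From mathcomp Require Import all_classical all_reals all_analysis.
From mathcomp Require Import complex.
From mathcomp Require Import ring.
Set Implicit Arguments. Unset Strict Implicit. Unset Printing Implicit Defensive.
Import Order.TTheory GRing.Theory Num.Theory.
Local Open Scope ring_scope.

(* Conjugation by an invertible upper
   triangular matrix preserves upper triangular matrices and their
   diagonals; hence Ad_{B^-1} fixes the f-coordinate (as gamma is not
   constant) and preserves t_gamma(n).  The pairing is the trace form
   <xi, Y> = c x0 + tr (Y X), so <xi, B^-1 Y B> = c x0 + tr (Y (B X B^-1));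
   splitting B X B^-1 into its strictly lower part I and an upper
   triangular remainder gives the formula for I_0, since tr (Y U) only
   sees the diagonals of the upper triangular Y and U.  Conversely X is
   the strictly lower part of B^-1 I B, which gives injectivity. *)

Section UpperTriangular.

Variables (F : fieldType) (n : nat).
Implicit Types B M P Q : 'M[F]_n.

Definition upper_triangular M := forall i j : 'I_n, (j < i)%N -> M i j = 0.

Lemma mulmx_upper P Q :
  upper_triangular P -> upper_triangular Q -> upper_triangular (P *m Q).
Proof.
move=> Pu Qu i j ji; rewrite mxE big1 // => k _.
have [ki|ik] := ltnP k i; first by rewrite Pu ?mul0r.
by rewrite Qu ?mulr0 // (leq_trans ji).
Qed.

Lemma mulmx_upper_diag P Q i :
  upper_triangular P -> upper_triangular Q -> (P *m Q) i i = P i i * Q i i.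
Proof.
move=> Pu Qu; rewrite mxE (bigD1 i) //= big1 ?addr0 // => k ki.
have [k_lt_i|i_lt_k|/val_inj k_eq_i] := ltngtP k i.
- by rewrite Pu ?mul0r.
- by rewrite Qu ?mulr0.
- by rewrite k_eq_i eqxx in ki.
Qed.

Lemma mxtrace_mul_upper P Q :
  upper_triangular P -> upper_triangular Q ->
  \tr (P *m Q) = \sum_i P i i * Q i i.
Proof. by move=> Pu Qu; apply: eq_bigr => i _; rewrite mulmx_upper_diag. Qed.

Lemma unitmx_upper_diag B i :
  B \in unitmx -> upper_triangular B -> B i i != 0.
Proof.
move=> Bu Bup; apply: contraTneq Bu => Bii0.
rewrite unitmxE -det_tr det_trig; last first.
  by apply/is_trig_mxP => a b ab; rewrite mxE Bup.
by rewrite (bigD1 i) //= mxE Bii0 mul0r unitr0.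
Qed.

Lemma invmx_upper B :
  B \in unitmx -> upper_triangular B -> upper_triangular (invmx B).
Proof.
(* Strong induction on the column j: in the (i, j) entry of invmx B *m B = 1
   only the term k = j survives, and B j j is nonzero. *)
move=> Bu Bup i j; move: {2}(nat_of_ord j) (erefl (nat_of_ord j)) => m.
elim/ltn_ind: m i j => m IH i j jm ji.
have := congr1 (fun M : 'M[F]_n => M i j) (mulVmx Bu).
rewrite /= !mxE -val_eqE gtn_eqF // (bigD1 j) //= big1 => [|k kj].
  move=> /eqP; rewrite addr0 mulf_eq0 => /orP[/eqP //|Bjj0].
  by have := unitmx_upper_diag j Bu Bup; rewrite Bjj0.
have [k_lt_j|j_lt_k|/val_inj k_eq_j] := ltngtP k j.
- by rewrite (IH k) ?mul0r // -?jm // (ltn_trans k_lt_j).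
- by rewrite Bup ?mulr0.
- by rewrite k_eq_j eqxx in kj.
Qed.

Lemma conj_upper B M :
  B \in unitmx -> upper_triangular B -> upper_triangular M ->
  upper_triangular (invmx B *m M *m B).
Proof.
by move=> Bu Bup Mu; do 2!apply: mulmx_upper => //; exact: invmx_upper.
Qed.

Lemma conj_upper_diag B M i :
  B \in unitmx -> upper_triangular B -> upper_triangular M ->
  (invmx B *m M *m B) i i = M i i.
Proof.
move=> Bu Bup Mu; have Cup := invmx_upper Bu Bup.
have := mulmx_upper_diag i Cup Bup; rewrite mulVmx // mxE eqxx /= => CB.
rewrite !mulmx_upper_diag //; last exact: mulmx_upper.
by rewrite mulrAC -CB mul1r.
Qed.

End UpperTriangular.

Section Realization.

Variables (F : fieldType) (n : nat) (g : 'rV[F]_n).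

Lemma realizeE c A i j :
  realize g c A i j =
  (if i == j then c * g 0 i else 0) + (if (i < j)%N then A i j else 0).
Proof.
by rewrite !mxE; case: eqP => [->|_]; rewrite ?mulr1n ?mulr0n ?mulr0.
Qed.

Lemma realize_upper c A : upper_triangular (realize g c A).
Proof.
by move=> i j ji; rewrite realizeE -val_eqE gtn_eqF // ltnNge (ltnW ji) addr0.
Qed.

Lemma realize_diag c A i : realize g c A i i = c * g 0 i.
Proof. by rewrite realizeE eqxx ltnn addr0. Qed.

Lemma realize_upper_id c M :
  upper_triangular M -> (forall i, M i i = c * g 0 i) -> realize g c M = M.
Proof.
move=> Mu Md; apply/matrixP => i j; rewrite realizeE.
have [i_lt_j|j_lt_i|/val_inj <-] := ltngtP i j.
- by rewrite -val_eqE ltn_eqF // add0r.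
- by rewrite -val_eqE gtn_eqF // addr0 Mu.
- by rewrite eqxx addr0 Md.
Qed.

Lemma realize_conj B c A :
  B \in unitmx -> upper_triangular B ->
  realize g c (invmx B *m realize g c A *m B) = invmx B *m realize g c A *m B.
Proof.
move=> Bu Bup; apply: realize_upper_id; first exact/conj_upper/realize_upper.
by move=> i; rewrite conj_upper_diag ?realize_diag //; exact: realize_upper.
Qed.

Lemma realize_conj_scalar i0 j0 B c A c' A' :
  g 0 i0 != g 0 j0 -> B \in unitmx -> upper_triangular B ->
  realize g c' A' = invmx B *m realize g c A *m B -> c' = c.
Proof.
move=> gij Bu Bup e.
have cg k : c' * g 0 k = c * g 0 k.
  rewrite -(realize_diag c' A' k) e conj_upper_diag ?realize_diag //.
  exact: realize_upper.
have [k gk] : exists k, g 0 k != 0.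
  have [gi0|] := eqVneq (g 0 i0) 0; last by exists i0.
  by exists j0; rewrite -gi0 eq_sym.
exact: (mulIf gk) (cg k).
Qed.

Lemma pair_trace x0 X c A :
  strictly_lower X -> pair x0 X c A = c * x0 + \tr (realize g c A *m X).
Proof.
move=> Xl; congr (_ + _); apply: eq_bigr => i _; rewrite mxE big_mkcond.
apply: eq_bigr => j _; rewrite realizeE mulrDl.
case: eqP => [<-|_]; first by rewrite ltnn Xl ?mulr0 ?mul0r ?add0r.
by rewrite mul0r add0r; case: ifP; rewrite ?mul0r.
Qed.

End Realization.

Section Coadjoint.

Variables (F : fieldType) (n : nat) (B : 'M[F]_n).
Hypotheses (B_unit : B \in unitmx) (B_upper : upper_triangular B).

Implicit Types X : 'M[F]_n.

Let Binv_upper : upper_triangular (invmx B) := invmx_upper B_unit B_upper.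

Lemma Iij_conj X i j : Iij B X i j = (B *m X *m invmx B) i j.
Proof.
rewrite /Iij big_rmcond => [|a]; last first.
  by rewrite -ltnNge => ai; rewrite big1 // => b _; rewrite B_upper ?mul0r.
transitivity (\sum_a \sum_b B i a * invmx B b j * X a b).
  apply: eq_bigr => a _; apply: big_rmcond => b; rewrite -ltnNge => jb.
  by rewrite Binv_upper ?mulr0 ?mul0r.
rewrite mxE; under [RHS]eq_bigr do rewrite mxE big_distrl /=.
rewrite exchange_big /=; apply: eq_bigr => a _; apply: eq_bigr => b _.
by rewrite mulrAC.
Qed.

Lemma Imat_conj_sub_upper X :
  upper_triangular (B *m X *m invmx B - Imat B X).
Proof. by move=> i j ji; rewrite !mxE ji Iij_conj !mxE subrr. Qed.

Lemma Imat_conj_inv X (i j : 'I_n) :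
  strictly_lower X -> (j < i)%N -> X i j = (invmx B *m Imat B X *m B) i j.
Proof.
move=> Xl ji; rewrite -[Imat B X](subKr (B *m X *m invmx B)) mulmxBr mulmxBl.
have -> : invmx B *m (B *m X *m invmx B) *m B = X.
  by rewrite !mulmxA mulVmx // mul1mx -mulmxA mulVmx // mulmx1.
have U := conj_upper B_unit B_upper (Imat_conj_sub_upper X).
by rewrite mxE [X in _ + X]mxE (U i j ji) subr0.
Qed.

Lemma I0_conj (g : 'rV[F]_n) X x0 :
  strictly_lower X ->
  I0 g B X x0 = x0 + \sum_l g 0 l * (B *m X *m invmx B) l l.
Proof.
move=> Xl; congr (_ + _).
transitivity (\sum_i \sum_j \sum_l g 0 l * B l i * invmx B j l * X i j).
  apply: eq_bigr => i _.
  rewrite big_rmcond => [|j]; last first.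
    by rewrite -leqNgt => ij; rewrite big1 // => l _; rewrite Xl ?mulr0.
  apply: eq_bigr => j _; apply: big_rmcond => l.
  rewrite negb_and -!ltnNge => /orP[l_lt_j|i_lt_l].
    by rewrite Binv_upper ?mulr0 ?mul0r.
  by rewrite B_upper ?mulr0 ?mul0r.
rewrite exchange_big; under eq_bigr do rewrite exchange_big.
rewrite exchange_big.
apply: eq_bigr => l _; rewrite mxE big_distrr; apply: eq_bigr => j _.
rewrite mxE big_distrl big_distrr; apply: eq_bigr => i _ /=; ring.
Qed.

Lemma coadjoint_pair (g : 'rV[F]_n) i0 j0 :
  g 0 i0 != g 0 j0 ->
  forall x0 X, strictly_lower X ->
  forall c A c' A', realize g c' A' = invmx B *m realize g c A *m B ->
  pair x0 X c' A' = pair (I0 g B X x0) (Imat B X) c A.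
Proof.
move=> gij x0 X Xl c A c' A' e.
have Il : strictly_lower (Imat B X) by move=> i j ij; rewrite mxE ltnNge ij.
have c'_eq := realize_conj_scalar gij B_unit B_upper e; subst c'.
rewrite !(pair_trace g) // e I0_conj // mulrDr -addrA; congr (_ + _).
have -> : \tr (invmx B *m realize g c A *m B *m X) =
          \tr (realize g c A *m (B *m X *m invmx B)).
  by rewrite -!mulmxA mxtrace_mulC -!mulmxA.
rewrite -{1}(subrK (Imat B X) (B *m X *m invmx B)) mulmxDr mxtraceD.
rewrite mxtrace_mul_upper; [|exact: realize_upper|exact: Imat_conj_sub_upper].
congr (_ + _); rewrite mulr_sumr; apply: eq_bigr => l _.
by rewrite realize_diag mxE [X in _ + X]mxE [Imat _ _ l l]mxE ltnn subr0 mulrA.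
Qed.

Lemma coadjoint_inj (g : 'rV[F]_n) x0 x0' X X' :
  strictly_lower X -> strictly_lower X' ->
  I0 g B X x0 = I0 g B X' x0' -> Imat B X = Imat B X' ->
  x0 = x0' /\ X = X'.
Proof.
move=> Xl Xl' e0 eI.
have eX : X = X'.
  apply/matrixP => i j; have [ji|ij] := ltnP j i; last by rewrite Xl ?Xl'.
  by rewrite (Imat_conj_inv Xl ji) (Imat_conj_inv Xl' ji) eI.
by split=> //; move: e0; rewrite !I0_conj // eX => /addIr.
Qed.

End Coadjoint.

Lemma lemma1_field (F : fieldType) (expF : F -> F) : lemma1_stmt expF.
Proof.
move=> n g _ [i0 [j0 gij]] B [Bu [Bup _]]; split.
- move=> c A; exists c, (invmx B *m realize g c A *m B).
  exact: realize_conj.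
- exact: coadjoint_pair gij.
- by move=> X _ i j _; rewrite Iij_conj.
- exact: coadjoint_inj.
Qed.

Theorem lemma1 (R : realType) :
  lemma1_stmt (F := R) expR /\ lemma1_stmt (F := R[i]) (@cexp R).
Proof. by split; apply: lemma1_field. Qed.
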